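(* Let $\Gamma$ be a simple, undirected, connected graph of order $p\ge 2$, minimum degree $\delta$ and maximum degree $\Delta$. Then $$\gamma_{[3R]}(\Gamma)\le \left\lfloor \frac{4p}{\delta+1}\left(\ln\left(\frac{3(\delta+1)}{4}\right)+1\right)\right\rfloor.$$
   Context: For a graph $\Gamma=(V,E)$ and $h:V\to\{0,1,2,3,4\}$, let $AN(v)=\{w\in N(v):h(w)\ge 1\}$, $AN[v]=AN(v)\cup\{v\}$ and $h(S)=\sum_{u\in S}h(u)$. $h$ is a triple Roman dominating function (3RDF) if every $v$ with $h(v)<3$ satisfies $h(AN[v])\ge|AN(v)|+3$. The triple Roman domination number $\gamma_{[3R]}(\Gamma)$ is the minimum weight $h(V)$ of a 3RDF of $\Gamma$. *)

From mathcomp Require Import all_boot.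
From Stdlib Require Import Reals ZArith.
Set Implicit Arguments. Unset Strict Implicit. Unset Printing Implicit Defensive.

Section TripleRoman.
Variables (T : finType) (e : rel T).

Definition simple_graph : Prop := symmetric e /\ irreflexive e.
Definition connected_graph : Prop := forall x y : T, connect e x y.

Definition degree (v : T) : nat := #|[set w | e v w]|.
(* minimum degree; #|T| exceeds every degree, so it is a neutral start value *)
Definition min_degree : nat := \big[minn/#|T|]_(v : T) degree v.

Definition AN (h : {ffun T -> 'I_5}) (v : T) : {set T} :=
  [set w | e v w && (1 <= h w)].
Definition ANc (h : {ffun T -> 'I_5}) (v : T) : {set T} := v |: AN h v.
Definition hsum (h : {ffun T -> 'I_5}) (S : {set T}) : nat :=
  \sum_(u in S) (h u : nat).
Definition weight (h : {ffun T -> 'I_5}) : nat := \sum_(u : T) (h u : nat).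

Definition is3RDF (h : {ffun T -> 'I_5}) : bool :=
  [forall v, (h v < 3) ==> (#|AN h v| + 3 <= hsum h (ANc h v))].

(* minimum weight of a 3RDF; every weight is <= 4 #|T| and the constant 4
   function is a 3RDF, so the start value 4 #|T| does not affect the min *)
Definition gamma3R : nat :=
  \big[minn/4 * #|T|]_(h : {ffun T -> 'I_5} | is3RDF h) weight h.

End TripleRoman.

From mathcomp Require Import all_boot order zify.
From Stdlib Require Import Reals ZArith Lra Lia.

Set Implicit Arguments.
Unset Strict Implicit.
Unset Printing Implicit Defensive.

(* Greedy argument.  Putting 4 on a vertex set A and 3 on every vertex whose
   closed neighbourhood misses A gives a 3RDF of weight 4|A| + 3u, where u is
   the number of such undominated vertices.  Every undominated vertex lies in
   at least delta + 1 closed neighbourhoods, so some vertex x has m >= u(delta+1)/p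
   undominated vertices in its closed neighbourhood; adding x to A costs 4 and
   lowers u by m.  With c = 4p/(delta+1), the potential phi(u) = 3u for u <= c/3
   and phi(u) = c (1 + ln (3u/c)) beyond is concave with slope at least
   min(3, c/u) left of u, so a step with m >= 2 lowers it by at least 4, while
   m <= 1 forces u <= c/4 and phi(u) = 3u.  Hence gamma <= phi(p), which is the
   bound. *)

Section Potential.
Local Open Scope R_scope.

Lemma ln_sub_ge (u v : R) : 0 < u -> 0 < v -> (u - v) / u <= ln u - ln v.
Proof.
move=> u_gt0 v_gt0.
have vu_gt0 : 0 < v / u by apply: Rdiv_lt_0_compat.
have := exp_ineq1_le (ln (v / u)).
rewrite exp_ln // /Rdiv ln_mult ?ln_Rinv //; last exact: Rinv_0_lt_compat.
have -> : (u - v) * / u = 1 - v * / u by field; lra.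
lra.
Qed.

Definition potential (c u : R) : R :=
  if Rle_dec u (c / 3) then 3 * u else c * (1 + ln u - ln (c / 3)).

Lemma potential_linear (c u : R) : u <= c / 3 -> potential c u = 3 * u.
Proof. by rewrite /potential; case: Rle_dec. Qed.

Lemma potential_log (c u : R) :
  c / 3 < u -> potential c u = c * (1 + ln u - ln (c / 3)).
Proof. by rewrite /potential; case: Rle_dec => // ?; lra. Qed.

Lemma potential_small (c u : R) : 0 <= u -> 4 * u <= c -> potential c u = 3 * u.
Proof. by move=> u_ge0 uc; rewrite potential_linear //; lra. Qed.

Lemma potential_sub_ge (c u v : R) : 0 < c -> v <= u ->
  (u - v) * Rmin 3 (c / u) <= potential c u - potential c v.
Proof.
move=> c_gt0 vu; set k := Rmin 3 (c / u).
have k_le3 : k <= 3 by apply: Rmin_l.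
have k_le : k <= c / u by apply: Rmin_r.
have s_gt0 : 0 < c / 3 by lra.
have c_ge0 := Rlt_le _ _ c_gt0.
have [us|us] := Rle_lt_dec u (c / 3).
  rewrite !potential_linear; try lra.
  have : (u - v) * k <= (u - v) * 3 by apply: Rmult_le_compat_l; lra.
  lra.
rewrite potential_log //.
have u_gt0 : 0 < u by lra.
have [vs|vs] := Rle_lt_dec v (c / 3).
- rewrite potential_linear //.
  move: (ln_sub_ge u_gt0 s_gt0) => /(Rmult_le_compat_l c _ _ c_ge0).
  have : (c / 3 - v) * k <= (c / 3 - v) * 3 by apply: Rmult_le_compat_l; lra.
  have : (u - c / 3) * k <= (u - c / 3) * (c / u).
    by apply: Rmult_le_compat_l; lra.
  have -> : (u - c / 3) * (c / u) = c * ((u - c / 3) / u) by field; lra.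
  lra.
- rewrite potential_log //.
  move: (ln_sub_ge u_gt0 (Rlt_trans _ _ _ s_gt0 vs)).
  move=> /(Rmult_le_compat_l c _ _ c_ge0).
  have : (u - v) * k <= (u - v) * (c / u) by apply: Rmult_le_compat_l; lra.
  have -> : (u - v) * (c / u) = c * ((u - v) / u) by field; lra.
  lra.
Qed.

Lemma potential_step (c u m : R) : 0 < c -> 2 <= m <= u -> 4 * u <= c * m ->
  potential c (u - m) + 4 <= potential c u.
Proof.
move=> c_gt0 [m_ge2 mu] um_le.
have := potential_sub_ge c_gt0 (_ : u - m <= u).
have -> : u - (u - m) = m by ring.
have : 4 <= m * Rmin 3 (c / u).
  rewrite /Rmin; case: Rle_dec => _; first lra.
  apply: (Rmult_le_reg_r u); first lra.
  have -> : m * (c / u) * u = c * m by field; lra.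
  lra.
lra.
Qed.

Lemma potential_order (p d : R) : 0 < p -> 1 <= d ->
  potential (4 * p / (d + 1)) p = 4 * p / (d + 1) * (ln (3 * (d + 1) / 4) + 1).
Proof.
move=> p_gt0 d_ge1.
rewrite potential_log; last first.
  apply: (Rmult_lt_reg_r (3 * (d + 1))); first lra.
  have -> : 4 * p / (d + 1) / 3 * (3 * (d + 1)) = 4 * p by field; lra.
  nra.
have -> : 4 * p / (d + 1) / 3 = p * / (3 * (d + 1) / 4) by field; lra.
have q_gt0 : 0 < 3 * (d + 1) / 4 by lra.
rewrite ln_mult ?ln_Rinv //; first ring.
exact: Rinv_0_lt_compat.
Qed.

End Potential.

Lemma Int_part_ge (z : Z) (x : R) : (IZR z <= x)%R -> (z <= Int_part x)%Z.
Proof.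
move=> zx; have [_ frac_lt1] := base_Int_part x.
have : (IZR z < IZR (Int_part x + 1))%R by rewrite plus_IZR; lra.
move/lt_IZR; lia.
Qed.

Section Domination.
Variables (T : finType) (e : rel T).

Definition closed_nbhd (v : T) : {set T} := v |: [set w | e v w].

Definition undominated (A : {set T}) : {set T} :=
  [set v | [disjoint closed_nbhd v & A]].

Definition rdf_of (A : {set T}) : {ffun T -> 'I_5} :=
  [ffun v => if v \in A then inord 4
             else if v \in undominated A then inord 3 else ord0].

Lemma gamma3R_le_weight (h : {ffun T -> 'I_5}) : is3RDF e h -> gamma3R e <= weight h.
Proof. exact: (@Order.TotalTheory.bigmin_le_cond _ nat). Qed.

Lemma min_degree_le (v : T) : min_degree e <= degree e v.
Proof. exact: (@Order.TotalTheory.bigmin_le _ nat). Qed.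

Lemma hsum_ANc_ge (h : {ffun T -> 'I_5}) (v a : T) :
  a \in AN e h v -> h a = 4 :> nat -> #|AN e h v| + 3 <= hsum h (ANc e h v).
Proof.
move=> aAN ha4.
apply: (@leq_trans (\sum_(u in AN e h v) h u)); last first.
  rewrite /hsum /ANc [X in _ <= X](big_setID (AN e h v)).
  by rewrite (setIidPr (subsetUr _ _)) leq_addr.
rewrite -sum1_card (bigD1 a) // [X in _ <= X](bigD1 a) //= ha4 addnAC leq_add2l.
by apply: leq_sum => u /andP[]; rewrite inE => /andP[].
Qed.

Lemma notin_undominated (A : {set T}) (v : T) : v \in A -> v \notin undominated A.
Proof.
move=> vA; rewrite inE; apply/negP => /disjointFl/(_ vA).
by rewrite !inE eqxx.
Qed.

Lemma rdf_of_is3RDF (A : {set T}) : is3RDF e (rdf_of A).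
Proof.
apply/forallP => v; apply/implyP; rewrite ffunE.
case: ifP => [_|vA]; first by rewrite inordK.
case: ifP => [_|]; first by rewrite inordK.
rewrite inE => /negbT; rewrite -setI_eq0 => /set0Pn[a].
rewrite !inE => /andP[va aA] _.
have av : a != v by apply: contraTneq aA => ->; rewrite vA.
apply: (@hsum_ANc_ge _ _ a); rewrite ?inE ffunE aA ?inordK //.
by move: va; rewrite (negbTE av) andbT.
Qed.

Lemma weight_rdf_of (A : {set T}) :
  weight (rdf_of A) = 4 * #|A| + 3 * #|undominated A|.
Proof.
rewrite /weight (eq_bigr (fun v =>
  (if v \in A then 4 else 0) + (if v \in undominated A then 3 else 0))).
  by rewrite big_split -!big_mkcond !sum_nat_const mulnC [3 * _]mulnC.
move=> v _; rewrite ffunE.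
case: ifP => [vA|_]; first by rewrite (negbTE (notin_undominated vA)) inordK.
by case: ifP; rewrite ?inordK.
Qed.

Lemma gamma3R_le_rdf_of (A : {set T}) :
  (INR (gamma3R e) <= 4 * INR #|A| + 3 * INR #|undominated A|)%R.
Proof.
have /leP/le_INR := gamma3R_le_weight (rdf_of_is3RDF A).
rewrite weight_rdf_of plus_INR !mult_INR /=; lra.
Qed.

Lemma undominated0 : undominated set0 = setT.
Proof. by apply/setP => v; rewrite !inE -setI_eq0 setI0 eqxx. Qed.

Lemma degree_gt0 (v : T) : connected_graph e -> 1 < #|T| -> 0 < degree e v.
Proof.
move=> e_conn T_gt1.
have /card_gt0P[w] : 0 < #|predC1 v| by rewrite cardC1; case: #|T| T_gt1 => [|[]].
rewrite !inE => wv.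
have /connectP[[|a p] /= path_p last_p] := e_conn v w.
  by rewrite last_p eqxx in wv.
case/andP: path_p => va _; apply/card_gt0P; exists a; by rewrite inE.
Qed.

Lemma min_degree_gt0 : connected_graph e -> 1 < #|T| -> 0 < min_degree e.
Proof.
move=> e_conn T_gt1; apply: (big_ind (fun k => 0 < k)) => [|k l|v _].
- by case: #|T| T_gt1.
- by rewrite leq_min => -> ->.
- exact: degree_gt0.
Qed.

Hypothesis e_sym : symmetric e.

Lemma closed_nbhd_sym (x y : T) : (x \in closed_nbhd y) = (y \in closed_nbhd x).
Proof. by rewrite !inE eq_sym e_sym. Qed.

Lemma undominatedU1 (x : T) (A : {set T}) :
  undominated (x |: A) = undominated A :\: closed_nbhd x.
Proof.
apply/setP => v; rewrite in_setD closed_nbhd_sym.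
rewrite !(in_set (fun v => [disjoint _ & _])) -!setI_eq0 setIUr setU_eq0.
by congr (_ && _); rewrite setI_eq0 disjoint_sym disjoints1.
Qed.

Lemma sum_card_closed_nbhdI (U : {set T}) :
  \sum_x #|closed_nbhd x :&: U| = \sum_(y in U) #|closed_nbhd y|.
Proof.
have card_in (B C : {set T}) : #|B :&: C| = \sum_(y in B) (y \in C).
  rewrite -sum1_card big_mkcond [RHS]big_mkcond.
  by apply: eq_bigr => y _; rewrite !inE; case: (y \in B); case: (y \in C).
under eq_bigr do rewrite setIC card_in.
under [RHS]eq_bigr do rewrite -sum1_card big_mkcond.
rewrite [RHS]exchange_big; apply: eq_bigr => x _; apply: eq_bigr => y _.
by rewrite closed_nbhd_sym; case: (_ \in _).
Qed.

Hypothesis e_irr : irreflexive e.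

Lemma card_closed_nbhd (v : T) : #|closed_nbhd v| = (degree e v).+1.
Proof. by rewrite cardsU1 inE e_irr. Qed.

Lemma exists_dense_closed_nbhd (U : {set T}) (x0 : T) :
  exists x, #|U| * (min_degree e).+1 <= #|T| * #|closed_nbhd x :&: U|.
Proof.
have [x _ x_max] := @arg_maxnP _ x0 predT (fun x => #|closed_nbhd x :&: U|) isT.
exists x; rewrite -sum_nat_const -[X in _ <= X]sum_nat_const.
apply: (@leq_trans (\sum_x #|closed_nbhd x :&: U|)); last exact: leq_sum.
rewrite sum_card_closed_nbhdI; apply: leq_sum => y _.
by rewrite card_closed_nbhd ltnS min_degree_le.
Qed.

Lemma gamma3R_le_potential (A : {set T}) :
  (INR (gamma3R e) <= 4 * INR #|A| +
     potential (4 * INR #|T| / (INR (min_degree e) + 1)) (INR #|undominated A|))%R.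
Proof.
set d := min_degree e; set c := (4 * INR #|T| / _)%R.
have d1_gt0 : (0 < INR d + 1)%R by have := pos_INR d; lra.
have c_ge0 : (0 <= c)%R.
  by apply: Rle_mult_inv_pos => //; have := pos_INR #|T|; lra.
have [n] := ubnP #|undominated A|; elim: n A => // n IH A; rewrite ltnS => U_le_n.
set U := undominated A in U_le_n *.
have stop : (4 * INR #|U| <= c)%R ->
    (INR (gamma3R e) <= 4 * INR #|A| + potential c (INR #|U|))%R.
  move=> small; rewrite potential_small //; last exact: pos_INR.
  exact: gamma3R_le_rdf_of.
have [U0 | [u _]] := set_0Vmem U; first by apply: stop; rewrite U0 cards0 /=; lra.
have [x /leP/le_INR] := exists_dense_closed_nbhd U u.
rewrite -/d !mult_INR S_INR; set m := #|closed_nbhd x :&: U| => x_dense.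
have dense : (4 * INR #|U| <= c * INR m)%R.
  apply: (Rmult_le_reg_r (INR d + 1)); first lra.
  have -> : (c * INR m * (INR d + 1) = 4 * (INR #|T| * INR m))%R.
    by rewrite /c; field; lra.
  lra.
have [/leP/le_INR m_le1 | m_ge2] := leqP m 1.
  apply: stop; have := Rmult_le_compat_l _ _ _ c_ge0 m_le1.
  by rewrite /= Rmult_1_r; lra.
have m_le_U : m <= #|U| by rewrite subset_leq_card ?subsetIr.
have Ux : #|undominated (x |: A)| = #|U| - m by rewrite undominatedU1 cardsD setIC.
have /IH : #|undominated (x |: A)| < n by rewrite Ux; lia.
rewrite Ux minus_INR; last exact/leP.
have /leP/le_INR : #|x |: A| <= #|A|.+1 by rewrite cardsU1; case: (x \notin A).
have T_gt0 : (0 < INR #|T|)%R by apply/lt_0_INR/ltP/card_gt0P; exists u.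
have c_gt0 : (0 < c)%R by rewrite /c; apply: Rdiv_lt_0_compat; lra.
have /leP/le_INR m_ge2R := m_ge2; have /leP/le_INR m_le_UR := m_le_U.
have := potential_step c_gt0 (conj m_ge2R m_le_UR) dense.
rewrite S_INR; lra.
Qed.

End Domination.

Theorem proposition11 (T : finType) (e : rel T) :
  simple_graph e -> connected_graph e -> 2 <= #|T| ->
  (Z.of_nat (gamma3R e) <=
   Int_part (4 * INR #|T| / (INR (min_degree e) + 1) *
             (ln (3 * (INR (min_degree e) + 1) / 4) + 1)))%Z.
Proof.
move=> [e_sym e_irr] e_conn T_gt1.
have /leP/le_INR /= d_ge1 := min_degree_gt0 e_conn T_gt1.
have /leP/le_INR /= T_ge2 := T_gt1.
apply: Int_part_ge; rewrite -INR_IZR_INZ.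
have := gamma3R_le_potential e_sym e_irr set0.
rewrite cards0 undominated0 cardsT potential_order /=; lra.
Qed.
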